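(* Let $N\ge 2$ and let $G$ be a connected oriented trivalent graph with $v$ vertices. Then $W_{sl(N)}(G)$, regarded as a function of $N$, is a polynomial in $N$ of degree at most $\frac{v}{2}+2$. (Consequently one may define $W_{sl(N)}^{\text{top}}(G)$ to be the coefficient of $N^{\frac{v}{2}+2}$ in this polynomial.)
   Context: An oriented trivalent graph is a finite graph (multiple edges and loops allowed) in which every vertex has degree 3, together with a cyclic ordering, at each vertex, of the three half-edges emanating from it. For a finite-dimensional metrized Lie algebra $L$ (a Lie algebra with an ad-invariant symmetric non-degenerate bilinear form $\langle\cdot,\cdot\rangle$), choose a basis $\{L_a\}_{a=1}^{\dim L}$, let $t_{ab}=\langle L_a,L_b\rangle$, let $(t^{ab})$ be the inverse matrix of $(t_{ab})$, and let $f_{abc}=\langle L_a,[L_b,L_c]\rangle$. For an oriented trivalent graph $G$, $W_L(G)$ is defined as follows: assign an index in $\{1,\dots,\dim L\}$ to every half-edge of $G$ and sum, over all such assignments, the product over all vertices of $f_{abc}$ (where $a,b,c$ are the indices on the three half-edges at that vertex read in their cyclic order) times the product over all edges of $t^{ab}$ (where $a,b$ are the indices on the two half-edges forming that edge). This is independent of the choice of basis. For $L=sl(N)$ the metric is the matrix trace in the defining representation: $\langle X,Y\rangle=\operatorname{tr}(XY)$. *)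

From HB Require Import structures.
From mathcomp Require Import all_boot all_order all_algebra.
Set Implicit Arguments. Unset Strict Implicit. Unset Printing Implicit Defensive.
Import Order.TTheory GRing.Theory Num.Theory.
Local Open Scope ring_scope.

(* ---------- Oriented trivalent graphs ----------
   A graph with v vertices has half-edge set  'I_v * 'I_3 : the half-edges
   at vertex x are (x,0), (x,1), (x,2), in this cyclic order (this encodes
   the orientation).  The edges are given by a fixed-point-free involution
   [e] on half-edges: {h, e h} is an edge.  Loops and multiple edges are
   allowed. *)
Definition halfedge (v : nat) := ('I_v * 'I_3)%type.

Definition he0 : 'I_3 := inord 0.
Definition he1 : 'I_3 := inord 1.
Definition he2 : 'I_3 := inord 2.

Definition is_oriented_trivalent (v : nat) (e : halfedge v -> halfedge v) :=
  involutive e /\ (forall h, e h != h).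

Definition tg_adj (v : nat) (e : halfedge v -> halfedge v) : rel 'I_v :=
  fun x y => [exists i : 'I_3, exists j : 'I_3, e (x, i) == (y, j)].

Definition tg_connected (v : nat) (e : halfedge v -> halfedge v) :=
  forall x y : 'I_v, connect (tg_adj e) x y.

Section Weight.
Variables (n : nat) (I : finType) (B : I -> 'M[rat]_n).

Definition metric (a b : I) : rat := \tr (B a *m B b).

Definition gram : 'M[rat]_#|I| :=
  \matrix_(a, b) metric (enum_val a) (enum_val b).

Definition tinv (a b : I) : rat := invmx gram (enum_rank a) (enum_rank b).

Definition fstruct (a b c : I) : rat :=
  \tr (B a *m (B b *m B c - B c *m B b)).

(* W_L(G): sum over all index assignments on half-edges; each edge {h, e h}
   contributes once (we take the half-edge with smaller rank). *)
Definition Wweight (v : nat) (e : halfedge v -> halfedge v) : rat :=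
  \sum_(phi : {ffun halfedge v -> I})
    (\prod_(x : 'I_v) fstruct (phi (x, he0)) (phi (x, he1)) (phi (x, he2))) *
    (\prod_(h : halfedge v | (enum_rank h < enum_rank (e h))%N)
        tinv (phi h) (phi (e h))).
End Weight.

(* ---------- sl(N) with its standard basis over Q ----------
   Basis indexed by pairs (i,j) in 'I_N * 'I_N other than (N-1,N-1):
   (i,j), i <> j   |->  E_ij
   (i,i), i < N-1  |->  E_ii - E_{N-1,N-1}                                 *)
Definition slidx (N : nat) :=
  {x : 'I_N * 'I_N | (val x.1 != N.-1)%N || (val x.2 != N.-1)%N}.

Definition slbasis (N : nat) (x : slidx N) : 'M[rat]_N :=
  let i := (val x).1 in let j := (val x).2 in
  \matrix_(k, l)
    if i != j then ((k == i) && (l == j))%:R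
    else ((k == l) && (k == i))%:R - ((k == l) && (val k == N.-1)%N)%:R.

Definition W_sl (N : nat) (v : nat) (e : halfedge v -> halfedge v) : rat :=
  Wweight (@slbasis N) e.

(* W_{sl(N)}(G) is computed in matrix units.  The inverse metric of sl(N) is
   the gl(N) one minus 1/N times the product of the trace parts; a trace part
   puts the identity matrix on a half-edge, and tr(X[Y,Z]) vanishes as soon as
   one argument is the identity.  Writing every tr(X[Y,Z]) as the difference
   of its two cyclically ordered traces, the gl(N) contraction leaves
   W = sum_S (+-1) N^f(S), summed over the 2^v orientations S of the vertices,
   where f(S) is the number of faces of the ribbon graph (G, S).  Euler's
   inequality v - 3v/2 + f(S) <= 2 for a connected ribbon graph gives
   f(S) <= v/2 + 2. *)

From HB Require Import structures.
From mathcomp Require Import all_boot all_order all_algebra all_fingroup.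
From mathcomp Require Import zify ring.
Set Implicit Arguments. Unset Strict Implicit. Unset Printing Implicit Defensive.

(** * Cycles of products of transpositions *)

Section PorbitMerge.
Local Open Scope group_scope.
Variable T : finType.
Implicit Types (s u : {perm T}) (a b x y z : T).

Lemma mem_porbit1 s x : s x \in porbit s x.
Proof. by have := mem_porbit s 1 x; rewrite expg1. Qed.

Lemma porbit_trans s x y z :
  y \in porbit s x -> z \in porbit s y -> z \in porbit s x.
Proof. by rewrite -eq_porbit_mem => /eqP <-. Qed.

Lemma sub_porbit s u : (forall z, s z \in porbit u z) ->
  forall x, {subset porbit s x <= porbit u x}.
Proof.
move=> su x _ /porbitP [i ->].
elim: i => [|i IH]; first by rewrite expg0 perm1 porbit_id.
by rewrite expgSr permM; apply: porbit_trans IH (su _).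
Qed.

Lemma connect_sub_porbit (r : rel T) s : (forall x y, r x y -> y \in porbit s x) ->
  forall x y, connect r x y -> y \in porbit s x.
Proof.
move=> rs x y /connectP [p]; elim: p x => [|z p IH] x /=; first by move=> _ ->; exact: porbit_id.
by case/andP => /rs xz /IH zy /zy; apply: porbit_trans xz.
Qed.

Lemma porbits_le1 s : (forall x y, y \in porbit s x) -> #|porbits s| <= 1.
Proof.
move=> trans; have [x0 _|T0] := pickP (@predT T).
  rewrite -(cards1 (porbit s x0)); apply/subset_leq_card/subsetP => _ /imsetP [y _ ->].
  by rewrite inE eq_porbit_mem.
by apply: leq_trans (leq_imset_card _ _) _; rewrite eq_card0.
Qed.

(* Following the [tperm a b * s]-orbit of [a] we walk along the [s]-orbit of
   [b], which avoids [a], until we come back to [b]. *)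
Lemma mem_porbit_mul_tperm s a b :
  a \notin porbit s b -> s a \in porbit (tperm a b * s) a.
Proof.
move=> sab; set u := tperm a b * s; set n := #|porbit s b|.
have n_gt0 : 0 < n by rewrite lt0n card_porbit_neq0.
have sXb_neq j : 0 < j < n -> (s ^+ j) b != b.
  case/andP=> j_gt0 jn; have := nth_uniq b _ _ (uniq_traject_porbit s b).
  rewrite size_traject => /(_ j 0 jn n_gt0).
  by rewrite !nth_traject // -permX => ->; rewrite -lt0n.
have uXa i : i < n -> (u ^+ i.+1) a = (s ^+ i.+1) b.
  elim: i => [|i IH] lt; first by rewrite !expg1 permM tpermL.
  have neq_a : a != (s ^+ i.+1) b by apply: contraNneq sab => ->; rewrite mem_porbit.
  have neq_b : b != (s ^+ i.+1) b by rewrite eq_sym sXb_neq // lt.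
  by rewrite expgSr permM IH ?(ltnW lt) // permM tpermD // -permM -expgSr.
have b_in : b \in porbit u a.
  have <- : (u ^+ n) a = b by rewrite -(prednK n_gt0) uXa ?prednK // permX iter_porbit.
  exact: mem_porbit.
have <- : u b = s a by rewrite permM tpermR.
exact: porbit_trans b_in (mem_porbit1 u b).
Qed.

Lemma sub_porbit_mul_tperm s a b : a \notin porbit s b ->
  forall x, {subset porbit s x <= porbit (tperm a b * s) x}.
Proof.
move=> sab; apply: sub_porbit => z.
have [->|za] := eqVneq z a; first exact: mem_porbit_mul_tperm.
have [->|zb] := eqVneq z b.
  by rewrite tpermC; apply: mem_porbit_mul_tperm; rewrite porbit_sym.
suff -> : s z = (tperm a b * s) z by exact: mem_porbit1.
by rewrite permM tpermD // eq_sym.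
Qed.

End PorbitMerge.

Section EulerBound.
Local Open Scope group_scope.
Variables (T : finType) (rho : {perm T}).
Implicit Types (l : seq (T * T)) (p : T * T).

Definition mul_tperms l := foldr (fun p s => tperm p.1 p.2 * s) rho l.

(* Only the transpositions joining two different cycles are applied, so the
   cycles of [merge_tperms l] are the components of the graph [tperms_rel l]. *)
Definition merge_tperms l :=
  foldr (fun p s => if p.1 \in porbit s p.2 then s else tperm p.1 p.2 * s) rho l.

Definition tperms_rel l : rel T :=
  fun x y => (y == rho x) || ((x, y) \in l) || ((y, x) \in l).

Lemma mul_tperms_cons p l : mul_tperms (p :: l) = tperm p.1 p.2 * mul_tperms l.
Proof. by []. Qed.

Lemma merge_tperms_cons p l : merge_tperms (p :: l) =
  if p.1 \in porbit (merge_tperms l) p.2 then merge_tperms l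
  else tperm p.1 p.2 * merge_tperms l.
Proof. by []. Qed.

Lemma sub_porbit_merge_tperms p l x :
  {subset porbit (merge_tperms l) x <= porbit (merge_tperms (p :: l)) x}.
Proof.
rewrite merge_tperms_cons; case: ifP => [_ y //|sep].
by apply: sub_porbit_mul_tperm; rewrite sep.
Qed.

Lemma merge_tperms_head p l : p.1 \in porbit (merge_tperms (p :: l)) p.2.
Proof.
rewrite merge_tperms_cons; case: ifP => // sep; set t := tperm _ _ * _.
have t1 : t p.1 = merge_tperms l p.2 by rewrite permM tpermL.
have : merge_tperms l p.2 \in porbit t p.2.
  by apply: sub_porbit_mul_tperm; rewrite ?sep ?mem_porbit1.
by rewrite -t1 => /porbit_trans; apply; rewrite porbit_sym mem_porbit1.
Qed.

Lemma mul_tperms_in_merge l x : mul_tperms l x \in porbit (merge_tperms l) x.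
Proof.
elim: l x => [|p l IH] x; first exact: mem_porbit1.
rewrite mul_tperms_cons permM.
apply: porbit_trans (sub_porbit_merge_tperms p (IH _)).
case: tpermP => [->|->|_ _]; last exact: porbit_id.
  by rewrite porbit_sym merge_tperms_head.
exact: merge_tperms_head.
Qed.

Lemma tperms_rel_porbit l x y :
  tperms_rel l x y -> y \in porbit (merge_tperms l) x.
Proof.
have rho_in z : rho z \in porbit (merge_tperms l) z.
  by elim: l => [|p l IH]; [exact: mem_porbit1 | exact: sub_porbit_merge_tperms].
have edge_in q : q \in l -> q.1 \in porbit (merge_tperms l) q.2.
  elim: l {rho_in} => [|p l IH] //; rewrite inE => /predU1P [->|/IH].
    exact: merge_tperms_head.
  exact: sub_porbit_merge_tperms.
case/orP => [/orP [/eqP ->|/edge_in] | /edge_in] //=; by rewrite porbit_sym.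
Qed.

(* A transposition changes the number of cycles by at most one; when it joins
   two components of [tperms_rel] it merges two cycles of both products. *)
Lemma porbits_mul_tperms_le l :
  #|porbits (mul_tperms l)| + #|porbits rho| <= size l + 2 * #|porbits (merge_tperms l)|.
Proof.
elim: l => [|p l IH]; first by rewrite /= add0n addnn -mul2n.
rewrite mul_tperms_cons merge_tperms_cons /=.
have /= := porbits_mul_tperm (mul_tperms l) p.1 p.2; rewrite -muln2.
move: IH; set c := #|porbits (tperm _ _ * mul_tperms l)|.
set a := #|porbits (mul_tperms l)|; set b := #|porbits rho|.
case: ifP => joined.
  by clearbody a b c; case: (_ \notin _); case: (_ != _) => /=; lia.
have /= := porbits_mul_tperm (merge_tperms l) p.1 p.2; rewrite -muln2 joined /=.
set d := #|porbits (tperm _ _ * merge_tperms l)|.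
have -> : p.1 != p.2 by apply: contraFneq joined => ->; exact: porbit_id.
have -> /= : p.1 \notin porbit (mul_tperms l) p.2.
  by apply: contraFN joined; apply: sub_porbit; exact: mul_tperms_in_merge.
by clearbody a b c d; lia.
Qed.

Lemma euler_bound l : (forall x y, connect (tperms_rel l) x y) ->
  #|porbits (mul_tperms l)| + #|porbits rho| <= size l + 2.
Proof.
move=> conn; have := porbits_mul_tperms_le l.
suff : #|porbits (merge_tperms l)| <= 1 by lia.
apply: porbits_le1 => x y; apply: connect_sub_porbit (conn x y); exact: tperms_rel_porbit.
Qed.

End EulerBound.

Section InvariantColourings.
Local Open Scope group_scope.
Variables (T A : finType) (s : {perm T}).

Lemma porbit_const (f : T -> A) : (forall z, f (s z) = f z) ->
  forall x y, y \in porbit s x -> f y = f x.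
Proof.
move=> fs x _ /porbitP [i ->]; elim: i => [|i IH]; first by rewrite expg0 perm1.
by rewrite expgSr permM fs.
Qed.

Lemma porbit_in_porbits x : porbit s x \in porbits s.
Proof. exact: imset_f. Qed.

Definition colour_of_cycles (g : {ffun {X | X \in porbits s} -> A}) : {ffun T -> A} :=
  [ffun z => g (exist _ (porbit s z) (porbit_in_porbits z))].

Lemma colour_of_cycles_inj : injective colour_of_cycles.
Proof.
move=> g1 g2 eq_g; apply/ffunP => -[X sX]; have /imsetP [z _ Xz] := sX.
have -> : exist _ X sX = exist _ (porbit s z) (porbit_in_porbits z) :> {X | X \in porbits s}.
  exact: val_inj.
by have := congr1 (fun r : {ffun T -> A} => r z) eq_g; rewrite !ffunE.
Qed.

Lemma card_perm_invariant_ffun :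
  #|[set r : {ffun T -> A} | [forall z, r (s z) == r z]]| = (#|A| ^ #|porbits s|)%N.
Proof.
have -> : [set r : {ffun T -> A} | [forall z, r (s z) == r z]] = colour_of_cycles @: setT.
  apply/setP => r; rewrite inE; apply/idP/imsetP => [/forallP rs | [g _ ->]].
    have cycle_rep (X : {X | X \in porbits s}) : exists z, val X == porbit s z.
      by case: X => X /= /imsetP [z _ ->]; exists z.
    exists [ffun X => r (xchoose (cycle_rep X))] => //; apply/ffunP => z; rewrite !ffunE.
    have := xchooseP (cycle_rep (exist _ (porbit s z) (porbit_in_porbits z))).
    by rewrite eq_sym eq_porbit_mem => /(porbit_const (fun y => eqP (rs y))).
  apply/forallP => z; rewrite !ffunE; apply/eqP; congr (g _); apply: val_inj.
  by have := porbit_perm s 1 z; rewrite expg1.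
by rewrite card_imset ?cardsT ?card_ffun ?card_sig //; exact: colour_of_cycles_inj.
Qed.

End InvariantColourings.

(** * Ribbon graph structures on a trivalent graph *)

Definition rot (b : bool) (i : 'I_3) : 'I_3 := if b then ordS i else ord_pred i.

Lemma rot_inj b : injective (rot b).
Proof. by case: b; [exact: ordS_inj | exact: ord_pred_inj]. Qed.

Lemma rot_orbit b (i k : 'I_3) : [|| k == i, k == rot b i | k == rot b (rot b i)].
Proof. by case: b; case: i => [[|[|[|i]]] Hi] //; case: k => [[|[|[|k]]] Hk]. Qed.

Section RibbonGraph.
Local Open Scope group_scope.
Variables (v : nat) (e : halfedge v -> halfedge v).
Hypotheses (eK : involutive e) (e_fixfree : forall h, e h != h).
Implicit Types (S : {ffun 'I_v -> bool}) (h : halfedge v).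

(* [S x] says whether the half-edges at [x] are cyclically ordered as given or
   reversed; the cycles of [face_perm S] are the faces of this ribbon graph. *)
Definition vrot S h : halfedge v := (h.1, rot (S h.1) h.2).

Lemma vrot_inj S : injective (vrot S).
Proof. by move=> [x i] [y j] [<-] /rot_inj ->. Qed.

Definition vrot_perm S := perm (@vrot_inj S).

Definition face S h := vrot S (e h).

Lemma face_inj S : injective (face S).
Proof. by move=> x y /vrot_inj /(inv_inj eK). Qed.

Definition face_perm S := perm (@face_inj S).

Definition edge_rep h := (enum_rank h < enum_rank (e h))%N.

Lemma edge_repN h : ~~ edge_rep h = edge_rep (e h).
Proof.
rewrite /edge_rep eK -leqNgt leq_eqVlt (inj_eq val_inj) (inj_eq enum_rank_inj).
by rewrite (negbTE (e_fixfree h)).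
Qed.

Lemma edge_rep_or h : edge_rep h || edge_rep (e h).
Proof. by rewrite -edge_repN orbN. Qed.

Lemma edge_rep_e h : edge_rep h -> ~~ edge_rep (e h).
Proof. by rewrite -edge_repN negbK. Qed.

Lemma card_edge_rep : (#|edge_rep| * 2 = 3 * v)%N.
Proof.
have := cardC edge_rep; rewrite card_prod !card_ord.
suff -> : #|[predC edge_rep]| = #|edge_rep| by set k := #|edge_rep|; clearbody k; lia.
have -> : #|[predC edge_rep]| = #|e @: [set h | edge_rep h]|.
  apply: eq_card => h; rewrite !inE edge_repN; apply/idP/imsetP.
    by move=> ?; exists (e h); rewrite ?inE // eK.
  by case=> h'; rewrite inE => ? ->; rewrite eK.
rewrite card_imset; last exact: inv_inj eK.
by apply: eq_card => h; rewrite inE.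
Qed.

Definition edge_list := [seq (h, e h) | h <- enum edge_rep].

Lemma mul_tperms_edges S (s : seq (halfedge v)) : uniq s -> all edge_rep s ->
  forall x, mul_tperms (vrot_perm S) [seq (h, e h) | h <- s] x =
            vrot S (if (x \in s) || (e x \in s) then e x else x).
Proof.
elim: s => [|h s IH]; first by move=> _ _ x; rewrite /= permE.
rewrite cons_uniq => /andP [hs us] /andP [eh es] x; rewrite map_cons mul_tperms_cons permM IH //.
have ehs : e h \notin s by apply: contra (edge_rep_e eh) => /(allP es).
case: tpermP => [->|->|xh xeh].
- by rewrite (negbTE ehs) eK (negbTE hs) mem_head.
- by rewrite eK (negbTE hs) (negbTE ehs) mem_head orbT.
- have exh : e x != h by apply/eqP => exh; apply: xeh; rewrite -exh eK.
  by rewrite !inE (negbTE exh) (_ : (x == h) = false) //; exact/eqP.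
Qed.

Lemma mul_tperms_edge_list S : mul_tperms (vrot_perm S) edge_list = face_perm S.
Proof.
apply/permP => x; rewrite mul_tperms_edges ?enum_uniq //; last first.
  by apply/allP => h; rewrite mem_enum.
by rewrite !mem_enum edge_rep_or permE.
Qed.

Lemma connect_edge_list S : tg_connected e ->
  forall x y, connect (tperms_rel (vrot_perm S) edge_list) x y.
Proof.
move=> conn; set r := tperms_rel _ _.
have r_vrot h : connect r h (vrot_perm S h) by apply: connect1; rewrite /r /tperms_rel eqxx.
have r_e h : connect r h (e h).
  apply: connect1; rewrite /r /tperms_rel /edge_list.
  have [eh|] := boolP (edge_rep h).
    by rewrite (map_f (fun h => (h, e h))) ?mem_enum ?orbT.
  rewrite edge_repN => eeh.
  have := map_f (fun h => (h, e h)) (_ : e h \in enum edge_rep).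
  by rewrite eK mem_enum => /(_ eeh) ->; rewrite !orbT.
have r_vertex x i k : connect r (x, i) (x, k).
  have vrotE j : vrot_perm S (x, j) = (x, rot (S x) j) by rewrite permE.
  case/or3P: (rot_orbit (S x) i k) => /eqP ->; first exact: connect0.
    by rewrite -vrotE.
  apply: connect_trans (r_vrot _) _.
  by rewrite vrotE -[(x, rot _ (rot _ i))]vrotE.
have r_adj x y i k : tg_adj e x y -> connect r (x, i) (y, k).
  case/existsP => i' /existsP [j' /eqP exy].
  apply: connect_trans (r_vertex x i i') _; apply: connect_trans (r_e _) _.
  by rewrite exy.
move=> [x i] [y k]; have /connectP [p] := conn x y.
elim: p x i => [|z p IH] x i /=; first by move=> _ ->.
by case/andP => /r_adj xz zp /(IH z i zp); apply: connect_trans (xz i i).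
Qed.

Lemma card_porbits_vrot S : v <= #|porbits (vrot_perm S)|.
Proof.
pose f x := porbit (vrot_perm S) (x, ord0 : 'I_3).
have vrotX x i j : (((vrot_perm S) ^+ j) (x, i)).1 = x.
  by elim: j => [|j IH]; rewrite ?expg0 ?perm1 // expgSr permM permE.
have f_inj : injective f.
  move=> x y fxy; have : (y, ord0) \in f x by rewrite fxy porbit_id.
  by case/porbitP => j /(congr1 fst) /=; rewrite vrotX.
rewrite -{1}(card_ord v) -(card_imset _ f_inj); apply/subset_leq_card/subsetP.
by move=> _ /imsetP [x _ ->]; exact: porbit_in_porbits.
Qed.

(* Euler's inequality for the ribbon graph: V - E + F <= 2 with E = 3V/2. *)
Lemma card_porbits_face S : tg_connected e -> #|porbits (face_perm S)| <= v./2 + 2.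
Proof.
move=> conn; have := euler_bound (connect_edge_list S conn).
rewrite mul_tperms_edge_list size_map -cardE.
have := card_porbits_vrot S; have := card_edge_rep; have := odd_double_half v.
rewrite -addnn; have := leq_b1 (odd v).
set a := #|porbits (face_perm S)|; set b := #|porbits (vrot_perm S)|; set c := #|edge_rep|.
set o := nat_of_bool (odd v); clearbody a b c o; lia.
Qed.

End RibbonGraph.

Import GRing.Theory Num.Theory.
Local Open Scope ring_scope.

(** * The inverse metric of sl(N) *)

Lemma mxtrace_delta_mul (R : pzRingType) n (i j : 'I_n) (A : 'M[R]_n) :
  \tr (delta_mx i j *m A) = A j i.
Proof.
rewrite /mxtrace (bigD1 i) //= big1 ?addr0 => [|k ki]; rewrite mxE.
  rewrite (bigD1 j) //= big1 ?addr0 => [|m mj]; first by rewrite mxE !eqxx mul1r.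
  by rewrite mxE (negbTE mj) andbF mul0r.
by rewrite big1 // => m _; rewrite mxE (negbTE ki) mul0r.
Qed.

Lemma mxtrace_delta (R : pzRingType) n (i j : 'I_n) :
  \tr (delta_mx i j : 'M[R]_n) = (i == j)%:R.
Proof. by rewrite -[delta_mx i j]mulmx1 mxtrace_delta_mul mxE eq_sym. Qed.

Definition gl_casimir N (al be : 'I_N * 'I_N) : rat :=
  ((al.1 == be.2) && (al.2 == be.1))%:R.

Definition diag_ind N (al : 'I_N * 'I_N) : rat := (al.1 == al.2)%:R.

Definition sl_casimir N (al be : 'I_N * 'I_N) : rat :=
  gl_casimir al be - N%:R^-1 * diag_ind al * diag_ind be.

Arguments gl_casimir {N}.
Arguments sl_casimir {N}.

Section SlDualBasis.
Variable n : nat.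
Local Notation N := n.+2.
Local Notation nn := (@ord_max n.+1).
Implicit Types (p q : 'I_N * 'I_N).

Definition sl_mx p : 'M[rat]_N :=
  if p.1 != p.2 then delta_mx p.1 p.2 else delta_mx p.1 p.1 - delta_mx nn nn.

Definition sl_dual_mx p : 'M[rat]_N :=
  if p.1 != p.2 then delta_mx p.2 p.1 else delta_mx p.1 p.1 - N%:R^-1 *: 1%:M.

Lemma slbasisE (x : slidx N) : slbasis x = sl_mx (val x).
Proof.
case: x => [[i j] Hij]; rewrite /slbasis /sl_mx /=.
case: ifP => _; apply/matrixP => k l; rewrite !mxE //.
have [->|kl] := eqVneq k l; first by rewrite /= !andbb.
rewrite /= (_ : (k == i) && (l == i) = false) 1?(_ : (k == nn) && (l == nn) = false) //.
  by apply/negbTE; apply: contra kl => /andP [/eqP -> /eqP ->].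
by apply/negbTE; apply: contra kl => /andP [/eqP -> /eqP ->].
Qed.

Lemma sl_mx_nn : sl_mx (nn, nn) = 0.
Proof. by rewrite /sl_mx /= eqxx subrr. Qed.

Lemma N_neq0 : (N%:R : rat) != 0.
Proof. by rewrite pnatr_eq0. Qed.

Lemma mxtrace_sl_dual p : p != (nn, nn) -> \tr (sl_dual_mx p) = 0.
Proof.
case: p => i j /= Hp; rewrite /sl_dual_mx /=; case: ifP => [ij|/negbFE/eqP ij].
  by rewrite mxtrace_delta eq_sym (negbTE ij).
by rewrite raddfB /= mxtraceZ mxtrace1 mxtrace_delta eqxx mulVf ?N_neq0 // subrr.
Qed.

Lemma mxtrace_sl_mx_dual p q : p != (nn, nn) -> q != (nn, nn) ->
  \tr (sl_mx p *m sl_dual_mx q) = (p == q)%:R.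
Proof.
case: p q => i j [k l] Hp Hq; rewrite /sl_mx /sl_dual_mx /= xpair_eqE.
move: Hp Hq; have [<-|ij] := eqVneq i j; have [<-|kl] := eqVneq k l; move=> Hp Hq;
  rewrite ?eqxx ?ij ?kl /=.
- rewrite mulmxBl mulmxBr mulmxBr !raddfB /= -!scalemxAr !mxtraceZ !mulmx1.
  rewrite !mxtrace_delta_mul !mxE !mxtrace_delta !eqxx andbb.
  have -> : (nn == k) = false by apply/negbTE; apply: contra Hq => /eqP <-.
  by rewrite /= mulr1 oppr0 sub0r opprK; ring.
- rewrite mulmxBl raddfB /= !mxtrace_delta_mul !mxE.
  rewrite (_ : (i == l) && (i == k) = false) 1?(_ : (nn == l) && (nn == k) = false) ?subrr.
  + by case: (i =P k) => [ik|] //=; case: (i =P l) => // il; move: kl; rewrite -ik -il eqxx.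
  + by apply/negbTE; apply: contra kl => /andP [/eqP <- /eqP <-].
  + by apply/negbTE; apply: contra kl => /andP [/eqP <- /eqP <-].
- by rewrite mxtrace_delta_mul !mxE /= (eq_sym j i) (negbTE ij) mulr0 subr0 andbC.
- by rewrite mxtrace_delta_mul mxE andbC.
Qed.

Lemma sl_mx_expansion (Y : 'M[rat]_N) :
  \sum_p \tr (sl_dual_mx p *m Y) *: sl_mx p = Y - (\tr Y / N%:R) *: 1%:M.
Proof.
set t := \tr Y / N%:R.
rewrite -(pair_bigA _ (fun i j => \tr (sl_dual_mx (i, j) *m Y) *: sl_mx (i, j))) /=.
rewrite [in RHS](matrix_sum_delta Y).
have row_i i : \sum_j \tr (sl_dual_mx (i, j) *m Y) *: sl_mx (i, j) =
    (Y i i - t) *: (delta_mx i i - delta_mx nn nn) + \sum_(j | j != i) Y i j *: delta_mx i j.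
  rewrite (bigD1 i) //=; congr (_ + _).
    rewrite /sl_dual_mx /sl_mx /= eqxx /=; congr (_ *: _).
    by rewrite mulmxBl raddfB /= mxtrace_delta_mul -scalemxAl mul1mx mxtraceZ /t mulrC.
  by apply: eq_bigr => j ji; rewrite /sl_dual_mx /sl_mx /= eq_sym ji mxtrace_delta_mul.
have row_Y i : \sum_j Y i j *: delta_mx i j =
    Y i i *: delta_mx i i + \sum_(j | j != i) Y i j *: delta_mx i j by rewrite (bigD1 i).
rewrite (eq_bigr _ (fun i _ => row_i i)) (eq_bigr _ (fun i _ => row_Y i)) !big_split /=.
suff -> : \sum_i (Y i i - t) *: (delta_mx i i - delta_mx nn nn) =
    \sum_i Y i i *: delta_mx i i - t *: 1%:M by rewrite addrAC.
under eq_bigr do rewrite scalerBr scalerBl.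
rewrite !sumrB -scaler_sumr -mx1_sum_delta -scaler_suml sumrB sumr_const card_ord.
have -> : t *+ N = \tr Y by rewrite /t -mulr_natr divfK ?N_neq0.
by rewrite subrr scale0r subr0.
Qed.

Lemma sum_slidx (V : nmodType) (F : 'I_N * 'I_N -> V) : F (nn, nn) = 0 ->
  \sum_(x : slidx N) F (val x) = \sum_p F p.
Proof.
move=> F0; rewrite [RHS](bigD1 (nn, nn)) //= F0 add0r.
rewrite (reindex_omap (val : slidx N -> 'I_N * 'I_N) insub) => [|p np]; last first.
  by rewrite insubT // /= -[_ || _]negb_and -xpair_eqE.
apply: eq_bigl => -[p np] /=; rewrite insubT /= ?(inj_eq val_inj) ?eqxx.
by move: np; rewrite -negb_and -xpair_eqE => ->.
Qed.

Lemma slbasis_expansion (Y : 'M[rat]_N) :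
  \sum_(x : slidx N) \tr (sl_dual_mx (val x) *m Y) *: slbasis x = Y - (\tr Y / N%:R) *: 1%:M.
Proof.
rewrite -sl_mx_expansion -(@sum_slidx _ (fun p => \tr (sl_dual_mx p *m Y) *: sl_mx p)).
  by apply: eq_bigr => x _; rewrite slbasisE.
by rewrite sl_mx_nn scaler0.
Qed.

Lemma slidx_neq_nn (x : slidx N) : val x != (nn, nn).
Proof. by case: x => -[i j] /=; rewrite xpair_eqE negb_and. Qed.

Lemma tinv_slbasis (a b : slidx N) :
  tinv (@slbasis N) a b = \tr (sl_dual_mx (val a) *m sl_dual_mx (val b)).
Proof.
pose M : 'M[rat]_#|{: slidx N}| :=
  \matrix_(i, j) \tr (sl_dual_mx (val (enum_val i)) *m sl_dual_mx (val (enum_val j))).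
suff gramM : gram (@slbasis N) *m M = 1%:M.
  have [gram_unit _] := mulmx1_unit gramM.
  have invM : invmx (gram (@slbasis N)) = M.
    by rewrite -[M]mul1mx -(mulVmx gram_unit) -mulmxA gramM mulmx1.
  by rewrite /tinv invM mxE !enum_rankK.
apply/matrixP => i k; rewrite !mxE; under eq_bigr do rewrite !mxE.
rewrite -(big_enum_val (fun x => metric (@slbasis N) (enum_val i) x *
    \tr (sl_dual_mx (val x) *m sl_dual_mx (val (enum_val k))))) /=.
set D := sl_dual_mx (val (enum_val k)).
have -> : \sum_(x in {: slidx N}) metric (@slbasis N) (enum_val i) x * \tr (sl_dual_mx (val x) *m D)
    = \tr (slbasis (enum_val i) *m \sum_(x : slidx N) \tr (sl_dual_mx (val x) *m D) *: slbasis x).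
  rewrite mulmx_sumr raddf_sum; apply: eq_bigr => x _.
  by rewrite /= -scalemxAr mxtraceZ mulrC.
rewrite slbasis_expansion mxtrace_sl_dual ?slidx_neq_nn // mul0r scale0r subr0.
by rewrite slbasisE mxtrace_sl_mx_dual ?slidx_neq_nn // (inj_eq val_inj) (inj_eq enum_val_inj).
Qed.

Lemma sum_slbasis_tinv (al be : 'I_N * 'I_N) :
  \sum_(a : slidx N) \sum_(b : slidx N)
     slbasis a al.1 al.2 * slbasis b be.1 be.2 * tinv (@slbasis N) a b = sl_casimir al be.
Proof.
have scaleE c (A : 'M[rat]_N) i j : (c *: A) i j = c * A i j by rewrite mxE.
have sum_b a : \sum_(b : slidx N) slbasis a al.1 al.2 * slbasis b be.1 be.2 *
    tinv (@slbasis N) a b = slbasis a al.1 al.2 * sl_dual_mx (val a) be.1 be.2.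
  have := congr1 (fun A : 'M[rat]_N => A be.1 be.2) (slbasis_expansion (sl_dual_mx (val a))).
  rewrite mxtrace_sl_dual ?slidx_neq_nn // mul0r scale0r subr0 /= summxE => <-.
  rewrite mulr_sumr; apply: eq_bigr => b _.
  by rewrite scaleE tinv_slbasis mxtrace_mulC -mulrA [X in _ * X]mulrC.
rewrite (eq_bigr _ (fun a _ => sum_b a)).
have := congr1 (fun A : 'M[rat]_N => A al.1 al.2) (slbasis_expansion (delta_mx be.2 be.1)).
rewrite /= summxE mxtrace_delta => expand_delta.
rewrite (eq_bigr (fun a => \tr (sl_dual_mx (val a) *m delta_mx be.2 be.1) * slbasis a al.1 al.2)).
  under eq_bigr do rewrite -scaleE.
  rewrite expand_delta !mxE /sl_casimir /gl_casimir /diag_ind (eq_sym be.2 be.1).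
  by congr (_ - _); ring.
by move=> a _; rewrite mxtrace_mulC mxtrace_delta_mul mulrC.
Qed.

End SlDualBasis.

(** * Expansion of the weight system *)

Lemma I3_cases (i : 'I_3) : [\/ i = he0, i = he1 | i = he2].
Proof.
by case: i => [[|[|[|m]]] Hm] //; [apply: Or31 | apply: Or32 | apply: Or33];
  apply/val_inj; rewrite /= inordK.
Qed.

Lemma he_eqF :
  ((he0 == he1) = false) * ((he1 == he0) = false) * ((he0 == he2) = false) *
  ((he2 == he0) = false) * ((he1 == he2) = false) * ((he2 == he1) = false).
Proof. by do !split; apply/negbTE; rewrite -(inj_eq val_inj) /= !inordK. Qed.

Lemma rot_he :
  (rot true he0 = he1) * (rot true he1 = he2) * (rot true he2 = he0) *
  (rot false he0 = he2) * (rot false he1 = he0) * (rot false he2 = he1).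
Proof. by do !split; apply/val_inj; rewrite /= !inordK. Qed.

Section BigHelpers.
Variable R : comPzRingType.

Lemma prod_I3 (F : 'I_3 -> R) : \prod_i F i = F he0 * F he1 * F he2.
Proof.
rewrite !big_ord_recl big_ord0 mulr1 mulrA; congr (F _ * F _ * F _);
  by apply/val_inj; rewrite /= ?inordK.
Qed.

Lemma sum_ffun_I3 (A : finType) (F : A -> A -> A -> R) :
  \sum_(t : {ffun 'I_3 -> A}) F (t he0) (t he1) (t he2) = \sum_a \sum_b \sum_c F a b c.
Proof.
have -> : \sum_a \sum_b \sum_c F a b c = \sum_(p : A * (A * A)) F p.1 p.2.1 p.2.2.
  by under eq_bigr => a _ do rewrite pair_bigA; rewrite pair_bigA.
pose f (t : {ffun 'I_3 -> A}) := (t he0, (t he1, t he2)).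
pose g (p : A * (A * A)) :=
  [ffun i => if i == he0 then p.1 else if i == he1 then p.2.1 else p.2.2].
rewrite (reindex f) //; exists g => [t _ | [a [b c]] _]; last by rewrite /f !ffunE !he_eqF !eqxx.
by apply/ffunP => i; rewrite ffunE; case: (I3_cases i) => ->; rewrite ?he_eqF ?eqxx.
Qed.

Lemma sum_ffun_uncurry (I J A : finType) (G : {ffun I * J -> A} -> R) :
  \sum_(T : {ffun I -> {ffun J -> A}}) G [ffun h => T h.1 h.2] = \sum_f G f.
Proof.
rewrite (reindex (fun T : {ffun I -> {ffun J -> A}} => [ffun h => T h.1 h.2])) //.
exists (fun f : {ffun I * J -> A} => [ffun x => [ffun j => f (x, j)]]) => [T _ | f _].
  by apply/ffunP => x; apply/ffunP => j; rewrite !ffunE.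
by apply/ffunP => -[x j]; rewrite !ffunE.
Qed.

Lemma sum_pred1_natr (A : finType) (F : A -> R) a : \sum_j (j == a)%:R * F j = F a.
Proof.
rewrite (bigD1 a) //= eqxx mul1r big1 ?addr0 // => k /negbTE ->; by rewrite mul0r.
Qed.

Lemma prod_natr_bool (A : finType) (P : pred A) :
  \prod_h (P h)%:R = ([forall h, P h])%:R :> R.
Proof.
have [/forallP Ph|/forallPn [h /negbTE Ph]] := boolP [forall h, P h].
  by rewrite big1 // => h _; rewrite Ph.
by rewrite (bigD1 h) //= Ph mul0r.
Qed.

End BigHelpers.

Section VertexWeight.
Variables (R : comPzRingType) (N v : nat).
Implicit Types (X Y Z : 'M[R]_N) (g : halfedge v -> 'M[R]_N) (S : {ffun 'I_v -> bool}).

Definition bracket_tr X Y Z := \tr (X *m (Y *m Z - Z *m Y)).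

Definition vertex_weight g :=
  \prod_(x : 'I_v) bracket_tr (g (x, he0)) (g (x, he1)) (g (x, he2)).

Definition bsign (b : bool) : R := if b then 1 else -1.

Definition orient_sign S := \prod_x bsign (S x).

Definition unit_mxs (psi : {ffun halfedge v -> 'I_N * 'I_N}) h : 'M[R]_N :=
  delta_mx (psi h).1 (psi h).2.

Lemma mxtrace_mul3 X Y Z :
  \tr (X *m (Y *m Z)) = \sum_a \sum_b \sum_c X a b * Y b c * Z c a.
Proof.
rewrite /mxtrace; apply: eq_bigr => a _; rewrite !mxE; apply: eq_bigr => b _.
by rewrite ?mxE mulr_sumr; apply: eq_bigr => c _; rewrite ?mxE mulrA.
Qed.

Lemma bracket_tr_expand (G : 'I_3 -> 'M[R]_N) :
  bracket_tr (G he0) (G he1) (G he2) = \sum_(b : bool) bsign b *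
    \sum_(t : {ffun 'I_3 -> 'I_N}) \prod_i G i (t i) (t (rot b i)).
Proof.
rewrite big_bool (_ : bsign true = 1) // (_ : bsign false = -1) // mul1r mulN1r.
under eq_bigr do rewrite prod_I3 !rot_he.
under [X in _ = _ - X]eq_bigr do rewrite prod_I3 !rot_he.
rewrite (sum_ffun_I3 (fun a b c => G he0 a b * G he1 b c * G he2 c a)).
rewrite (sum_ffun_I3 (fun a b c => G he0 a c * G he1 b a * G he2 c b)).
rewrite /bracket_tr mulmxBr raddfB /= !mxtrace_mul3; congr (_ - _).
apply: eq_bigr => a _; rewrite [RHS]exchange_big; apply: eq_bigr => b _.
by apply: eq_bigr => c _; rewrite mulrAC.
Qed.

Lemma vertex_weight_expand g : vertex_weight g = \sum_S orient_sign S *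
  \sum_(c : {ffun halfedge v -> 'I_N}) \prod_h g h (c h) (c (vrot S h)).
Proof.
rewrite /vertex_weight.
under eq_bigr => x _ do rewrite (bracket_tr_expand (fun i => g (x, i))).
rewrite bigA_distr_bigA; apply: eq_bigr => S _.
rewrite big_split /=; congr (_ * _).
rewrite bigA_distr_bigA /= -(sum_ffun_uncurry
  (fun c : {ffun halfedge v -> 'I_N} => \prod_h g h (c h) (c (vrot S h)))).
apply: eq_bigr => T _; rewrite pair_bigA /=; apply: eq_bigr => -[x i] _.
by rewrite !ffunE.
Qed.

Lemma vertex_weight_units g :
  vertex_weight g = \sum_(psi : {ffun halfedge v -> 'I_N * 'I_N})
    (\prod_h g h (psi h).1 (psi h).2) * vertex_weight (unit_mxs psi).
Proof.
under [RHS]eq_bigr do rewrite vertex_weight_expand mulr_sumr.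
rewrite exchange_big [LHS]vertex_weight_expand; apply: eq_bigr => S _.
under [RHS]eq_bigr do rewrite mulrCA.
rewrite -mulr_sumr; congr (_ * _).
under [RHS]eq_bigr do rewrite mulr_sumr.
rewrite exchange_big; apply: eq_bigr => c _.
rewrite (eq_bigr (fun psi : {ffun halfedge v -> 'I_N * 'I_N} => \prod_h
    (g h (psi h).1 (psi h).2 * (psi h == (c h, c (vrot S h)))%:R))); last first.
  move=> psi _; rewrite -big_split /=; apply: eq_bigr => h _; rewrite mxE.
  case: (psi h) => a b /=; rewrite xpair_eqE; congr (_ * (_)%:R).
  by rewrite (eq_sym a) (eq_sym b).
rewrite -(bigA_distr_bigA (fun h j => g h j.1 j.2 * (j == (c h, c (vrot S h)))%:R)).
apply: eq_bigr => h _.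
rewrite (eq_bigr (fun j => (j == (c h, c (vrot S h)))%:R * g h j.1 j.2)) ?sum_pred1_natr //.
by move=> j _; rewrite mulrC.
Qed.

Lemma eq_vertex_weight g1 g2 : g1 =1 g2 -> vertex_weight g1 = vertex_weight g2.
Proof. by move=> eq_g; apply: eq_bigr => x _; rewrite !eq_g. Qed.

Lemma vertex_weight_sum_at (K : finType) g h0 (M : K -> 'M[R]_N) :
  \sum_k vertex_weight (fun h => if h == h0 then M k else g h) =
  vertex_weight (fun h => if h == h0 then \sum_k M k else g h).
Proof.
under eq_bigr do rewrite vertex_weight_expand.
rewrite [RHS]vertex_weight_expand exchange_big; apply: eq_bigr => S _.
rewrite -mulr_sumr; congr (_ * _); rewrite exchange_big; apply: eq_bigr => c _.
rewrite [RHS](bigD1 h0) //= eqxx summxE mulr_suml; apply: eq_bigr => k _.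
by rewrite (bigD1 h0) //= eqxx; congr (_ * _); apply: eq_bigr => h /negbTE ->.
Qed.

Lemma bracket_tr1l Y Z : bracket_tr 1%:M Y Z = 0.
Proof. by rewrite /bracket_tr mul1mx raddfB /= mxtrace_mulC subrr. Qed.

Lemma bracket_tr1m X Z : bracket_tr X 1%:M Z = 0.
Proof. by rewrite /bracket_tr mul1mx mulmx1 subrr mulmx0 mxtrace0. Qed.

Lemma bracket_tr1r X Y : bracket_tr X Y 1%:M = 0.
Proof. by rewrite /bracket_tr mul1mx mulmx1 subrr mulmx0 mxtrace0. Qed.

Lemma vertex_weight_id_at g h0 :
  vertex_weight (fun h => if h == h0 then 1%:M else g h) = 0.
Proof.
rewrite /vertex_weight (bigD1 h0.1) //=; case: h0 => x0 i0 /=.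
rewrite !xpair_eqE eqxx /=.
by case: (I3_cases i0) => ->; rewrite ?he_eqF eqxx ?bracket_tr1l ?bracket_tr1m ?bracket_tr1r mul0r.
Qed.

End VertexWeight.

Arguments bsign {R}.
Arguments orient_sign {R v}.
Arguments unit_mxs {R N v}.

Section EdgeProducts.
Variables (v : nat) (e : halfedge v -> halfedge v).
Hypotheses (eK : involutive e) (e_fixfree : forall h, e h != h).
Local Notation edge_rep := (edge_rep e).

Lemma prod_halfedges (R : comPzRingType) (F : halfedge v -> R) :
  \prod_h F h = \prod_(h | edge_rep h) (F h * F (e h)).
Proof.
rewrite (bigID edge_rep) /= big_split /=; congr (_ * _).
rewrite (reindex e) /=; last by apply: onW_bij; exact: inv_bij eK.
by apply: eq_bigl => h; rewrite (edge_repN eK e_fixfree) eK.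
Qed.

Lemma sum_ffun_prod_edges (R : comPzRingType) (I : finType) (G : halfedge v -> I -> I -> R) :
  \sum_(phi : {ffun halfedge v -> I}) \prod_(h | edge_rep h) G h (phi h) (phi (e h)) =
  \prod_(h | edge_rep h) \sum_a \sum_b G h a b.
Proof.
rewrite [RHS](big_sub edge_rep); under [RHS]eq_bigr do rewrite pair_bigA.
rewrite bigA_distr_bigA /=.
pose pairs (phi : {ffun halfedge v -> I}) : {ffun {h in edge_rep} -> I * I} :=
  [ffun u => (phi (val u), phi (e (val u)))].
pose at_rep (P : {ffun {h in edge_rep} -> I * I}) h (hE : h \in edge_rep) :=
  P (exist _ h hE).
have pairs_inj : injective pairs.
  move=> phi1 phi2 eq_phi; apply/ffunP => h; have [hE|] := boolP (edge_rep h).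
    by have := congr1 (fun P => (at_rep P h hE).1) eq_phi; rewrite /at_rep /= !ffunE.
  rewrite edge_repN // => ehE.
  by have := congr1 (fun P => (at_rep P _ ehE).2) eq_phi; rewrite /at_rep /= !ffunE eK.
have pairs_bij : bijective pairs.
  apply: inj_card_bij pairs_inj _.
  rewrite !card_ffun card_prod card_sig card_prod !card_ord.
  have := card_edge_rep eK e_fixfree; set k := #|edge_rep| => hk.
  by rewrite expnMn -expnD (_ : (k + k = v * 3)%N) //; lia.
rewrite (reindex pairs) /=; last exact: onW_bij.
by apply: eq_bigr => phi _; rewrite [LHS](big_sub edge_rep); apply: eq_bigr => u _; rewrite ffunE.
Qed.

End EdgeProducts.

Lemma W_sl_expand n v (e : halfedge v -> halfedge v) :
  involutive e -> (forall h, e h != h) ->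
  W_sl n.+2 e = \sum_(psi : {ffun halfedge v -> 'I_n.+2 * 'I_n.+2})
    vertex_weight (unit_mxs psi) * \prod_(h | edge_rep e h) sl_casimir (psi h) (psi (e h)).
Proof.
move=> eK e_fixfree; rewrite /W_sl /Wweight.
rewrite (eq_bigr (fun phi : {ffun halfedge v -> slidx n.+2} =>
    vertex_weight (fun h => slbasis (phi h)) *
    \prod_(h | edge_rep e h) tinv (@slbasis n.+2) (phi h) (phi (e h)))) //.
under eq_bigr do rewrite vertex_weight_units mulr_suml.
rewrite exchange_big; apply: eq_bigr => psi _.
under eq_bigr do rewrite mulrAC.
rewrite -mulr_suml mulrC; congr (_ * _).
rewrite (eq_bigr (fun phi : {ffun halfedge v -> slidx n.+2} => \prod_(h | edge_rep e h)
    (slbasis (phi h) (psi h).1 (psi h).2 * slbasis (phi (e h)) (psi (e h)).1 (psi (e h)).2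
      * tinv (@slbasis n.+2) (phi h) (phi (e h))))); last first.
  move=> phi _; pose B h := slbasis (phi h) (psi h).1 (psi h).2.
  by rewrite (prod_halfedges eK e_fixfree B) -big_split.
rewrite (sum_ffun_prod_edges eK e_fixfree (fun h a b => slbasis a (psi h).1 (psi h).2 *
   slbasis b (psi (e h)).1 (psi (e h)).2 * tinv (@slbasis n.+2) a b)).
by apply: eq_bigr => h _; rewrite sum_slbasis_tinv.
Qed.

Section TraceTermsVanish.
Variables (n v : nat) (e : halfedge v -> halfedge v).
Hypotheses (eK : involutive e) (e_fixfree : forall h, e h != h).
Local Notation N := n.+1.
Local Notation J := ('I_N * 'I_N)%type.
Implicit Types (psi : {ffun halfedge v -> J}) (c : {ffun halfedge v -> J} -> rat).

Definition ffun_upd psi h0 j : {ffun halfedge v -> J} :=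
  [ffun h => if h == h0 then j else psi h].

Lemma sum_ffun_upd (F : {ffun halfedge v -> J} -> rat) h0 j0 :
  \sum_psi F psi =
  \sum_(psi : {ffun halfedge v -> J} | psi h0 == j0) \sum_(j : J) F (ffun_upd psi h0 j).
Proof.
rewrite exchange_big /= (partition_big (fun psi : {ffun halfedge v -> J} => psi h0) predT) //=.
apply: eq_bigr => j _.
rewrite (reindex_onto (fun psi : {ffun halfedge v -> J} => ffun_upd psi h0 j)
                     (fun psi => ffun_upd psi h0 j0)) /=.
  apply: eq_bigl => psi; rewrite ffunE !eqxx /=; apply/eqP/eqP => [<-|psi_h0].
    by rewrite ffunE eqxx.
  by apply/ffunP => h; rewrite !ffunE; case: eqP => // ->.
by move=> psi /eqP psi_h0; apply/ffunP => h; rewrite !ffunE; case: eqP => // ->.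
Qed.

(* Summing the diagonal units at [h0] produces the identity matrix there,
   and the Lie bracket vanishes on it. *)
Lemma sum_diag_at_vanish h0 c : (forall psi j, c (ffun_upd psi h0 j) = c psi) ->
  \sum_psi vertex_weight (unit_mxs psi) * (c psi * diag_ind (psi h0)) = 0.
Proof.
move=> c_upd; rewrite (sum_ffun_upd _ h0 (ord0, ord0)); apply: big1 => psi _.
pose W (M : 'M[rat]_N) := vertex_weight (fun h => if h == h0 then M else unit_mxs psi h).
have W_upd j : vertex_weight (unit_mxs (ffun_upd psi h0 j)) = W (delta_mx j.1 j.2).
  by apply: eq_vertex_weight => h; rewrite /unit_mxs ffunE; case: (h == h0).
under eq_bigr => j _ do rewrite W_upd c_upd ffunE eqxx mulrCA.
rewrite -mulr_sumr -(pair_bigA _ (fun a b => W (delta_mx a b) * diag_ind (a, b))) /=.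
have sum_b a : \sum_b W (delta_mx a b) * diag_ind (a, b) = W (delta_mx a a).
  rewrite -[RHS](sum_pred1_natr (fun b => W (delta_mx a b))).
  by apply: eq_bigr => b _; rewrite mulrC /diag_ind eq_sym.
rewrite (eq_bigr _ (fun a _ => sum_b a)) vertex_weight_sum_at -mx1_sum_delta.
by rewrite vertex_weight_id_at mulr0.
Qed.

Lemma sum_sl_casimir_edge h0 d : (forall psi j, d (ffun_upd psi h0 j) = d psi) ->
  \sum_psi vertex_weight (unit_mxs psi) * (d psi * sl_casimir (psi h0) (psi (e h0))) =
  \sum_psi vertex_weight (unit_mxs psi) * (d psi * gl_casimir (psi h0) (psi (e h0))).
Proof.
move=> d_upd; apply/eqP; rewrite -subr_eq0 -sumrB.
rewrite (eq_bigr (fun psi => - (vertex_weight (unit_mxs psi) *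
    (N%:R^-1 * d psi * diag_ind (psi (e h0)) * diag_ind (psi h0))))).
  rewrite sumrN sum_diag_at_vanish ?oppr0 // => psi j.
  by rewrite d_upd ffunE (negbTE (e_fixfree h0)).
by move=> psi _; rewrite /sl_casimir; ring.
Qed.

Definition edge_prod (K : J -> J -> rat) (A : {set halfedge v}) psi :=
  \prod_(h in A) K (psi h) (psi (e h)).

Definition ignores c (A : {set halfedge v}) :=
  forall psi psi', (forall h, h \notin A -> psi h = psi' h) -> c psi = c psi'.

Lemma edge_prod_upd K (A : {set halfedge v}) psi h0 j :
  {subset A <= edge_rep e} -> h0 \notin A -> edge_rep e h0 ->
  edge_prod K A (ffun_upd psi h0 j) = edge_prod K A psi.
Proof.
move=> A_rep h0A h0_rep; apply: eq_bigr => h hA; rewrite !ffunE.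
have [hh0|_] := eqVneq h h0; first by rewrite -hh0 hA in h0A.
case: eqP => // ehh0; have := edge_rep_e eK e_fixfree (A_rep _ hA).
by rewrite ehh0 h0_rep.
Qed.

Lemma sum_sl_to_gl_casimir (A : {set halfedge v}) c :
  {subset A <= edge_rep e} -> ignores c A ->
  \sum_psi vertex_weight (unit_mxs psi) * (c psi * edge_prod sl_casimir A psi) =
  \sum_psi vertex_weight (unit_mxs psi) * (c psi * edge_prod gl_casimir A psi).
Proof.
move cardA : #|A| => k; elim: k A c cardA => [|k IH] A c cardA A_rep c_ign.
  have -> : A = set0 by apply/eqP; rewrite -cards_eq0 cardA.
  by apply: eq_bigr => psi _; rewrite /edge_prod !big_set0.
have [h0 h0A] : exists h0, h0 \in A by apply/set0Pn; rewrite -card_gt0 cardA.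
set A' := A :\ h0; pose vw psi : rat := vertex_weight (unit_mxs psi).
have cardA' : #|A'| = k by move: cardA; rewrite (cardsD1 h0) h0A add1n => -[].
have h0_rep : edge_rep e h0 := A_rep _ h0A.
have A'_rep : {subset A' <= edge_rep e} by move=> h /setD1P [_ /A_rep].
have h0A' : h0 \notin A' by rewrite !inE eqxx.
have eh0A' : e h0 \notin A'.
  apply: contraL h0_rep => /setD1P [_ /A_rep].
  by move/(edge_rep_e eK e_fixfree); rewrite eK.
have split_h0 K psi : edge_prod K A psi = K (psi h0) (psi (e h0)) * edge_prod K A' psi.
  by rewrite /edge_prod (big_setD1 h0).
rewrite (eq_bigr (fun psi => vw psi * ((c psi * edge_prod sl_casimir A' psi) *
    sl_casimir (psi h0) (psi (e h0))))); last first.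
  by move=> psi _; rewrite split_h0 /vw; ring.
rewrite sum_sl_casimir_edge => [|psi j]; last first.
  rewrite edge_prod_upd //; congr (_ * _); apply: c_ign => h hA.
  by rewrite ffunE; case: eqP => // hh0; rewrite hh0 h0A in hA.
rewrite (eq_bigr (fun psi => vw psi * ((c psi * gl_casimir (psi h0) (psi (e h0))) *
    edge_prod sl_casimir A' psi))); last by move=> psi _; rewrite /vw; ring.
rewrite IH // => [|p1 p2 p12]; last first.
  congr (_ * _); last by rewrite (p12 h0) ?(p12 (e h0)).
  by apply: c_ign => h hA; apply: p12; rewrite !inE negb_and hA orbT.
by apply: eq_bigr => psi _; rewrite split_h0 /vw; ring.
Qed.

End TraceTermsVanish.

Section SlFaceSum.
Variables (n v : nat) (e : halfedge v -> halfedge v).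
Hypotheses (eK : involutive e) (e_fixfree : forall h, e h != h).
Local Notation N := n.+2.
Local Notation J := ('I_N * 'I_N)%type.

Lemma W_sl_gl_casimir : W_sl N e = \sum_(psi : {ffun halfedge v -> J})
  vertex_weight (unit_mxs psi) * \prod_(h | edge_rep e h) gl_casimir (psi h) (psi (e h)).
Proof.
rewrite (W_sl_expand n eK e_fixfree).
have rep_set (F : halfedge v -> rat) :
    \prod_(h | edge_rep e h) F h = 1 * \prod_(h in [set h | edge_rep e h]) F h.
  by rewrite mul1r; apply: eq_bigl => h; rewrite inE.
under eq_bigr do rewrite rep_set.
under [RHS]eq_bigr do rewrite rep_set.
by apply: sum_sl_to_gl_casimir => // h; rewrite inE.
Qed.

(* The [gl(N)] Casimir glues the index leaving [h] to the one entering [e h],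
   so only colourings constant along the faces survive. *)
Lemma sum_units_gl_casimir S (c : {ffun halfedge v -> 'I_N}) :
  \sum_(psi : {ffun halfedge v -> J}) (\prod_h unit_mxs psi h (c h) (c (vrot S h))) *
     \prod_(h | edge_rep e h) gl_casimir (psi h) (psi (e h)) =
  \prod_h (c (face_perm eK S h) == c h)%:R.
Proof.
pose psi_c : {ffun halfedge v -> J} := [ffun h => (c h, c (vrot S h))].
rewrite (eq_bigr (fun psi : {ffun halfedge v -> J} => (psi == psi_c)%:R *
    \prod_(h | edge_rep e h) gl_casimir (psi h) (psi (e h)))); last first.
  move=> psi _; congr (_ * _).
  rewrite (eq_bigr (fun h => (psi h == psi_c h)%:R)); last first.
    move=> h _; rewrite mxE /psi_c ffunE; case: (psi h) => a b /=.
    by rewrite xpair_eqE (eq_sym a) (eq_sym b).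
  rewrite prod_natr_bool; have -> // : [forall h, psi h == psi_c h] = (psi == psi_c).
  by apply/forallP/eqP => [psi_eq|-> //]; apply/ffunP => h; exact/eqP.
rewrite sum_pred1_natr (prod_halfedges eK e_fixfree); apply: eq_bigr => h _.
rewrite /gl_casimir /psi_c !ffunE /= !permE /face eK -natrM mulnb.
by rewrite (eq_sym (c h)) (eq_sym (c (vrot S h))).
Qed.

Lemma W_sl_face_sum :
  W_sl N e = \sum_(S : {ffun 'I_v -> bool}) orient_sign S * N%:R ^+ #|porbits (face_perm eK S)|.
Proof.
rewrite W_sl_gl_casimir.
under eq_bigr do rewrite vertex_weight_expand mulr_suml.
rewrite exchange_big; apply: eq_bigr => S _.
under eq_bigr do rewrite -mulrA.
rewrite -mulr_sumr; congr (_ * _).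
under eq_bigr do rewrite mulr_suml.
rewrite exchange_big /=.
under eq_bigr do rewrite sum_units_gl_casimir prod_natr_bool.
have := card_perm_invariant_ffun 'I_N (face_perm eK S); rewrite card_ord => card_inv.
rewrite -natrX -card_inv -natr_sum -sum1dep_card [in RHS]big_mkcond.
by congr (_%:R); apply: eq_bigr => c _; case: ifP.
Qed.

End SlFaceSum.

Theorem mainTheorem1 (v : nat) (e : halfedge v -> halfedge v) :
  is_oriented_trivalent e -> tg_connected e ->
  exists p : {poly rat},
    (size p <= v./2 + 3)%N /\
    (forall N : nat, (2 <= N)%N -> W_sl N e = p.[N%:R]).
Proof.
move=> [eK e_fixfree] conn.
exists (\sum_(S : {ffun 'I_v -> bool}) orient_sign S *: 'X^#|porbits (face_perm eK S)|).
split.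
  apply: leq_trans (size_sum _ _ _) _; apply/bigmax_leqP => S _.
  apply: leq_trans (size_scale_leq _ _) _.
  by rewrite size_polyXn addnS ltnS card_porbits_face.
case=> [|[|n]] // _; rewrite (W_sl_face_sum n eK e_fixfree) horner_sum.
by apply: eq_bigr => S _; rewrite hornerZ hornerXn.
Qed.
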